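(* On the event $\mathbb{G}_1$, for all episodes $k$, steps $h\in[H]$, states $s$, $B\in[\ell_h]$ and lookahead information $I$, it holds that $\mathfrak{Q}^*_h(s,B;I,V^*_{h+B})\le\mathfrak{Q}^*_h(s,B;I,\bar V^k_{h+B})$; in particular $V^*_h(s)\le\bar V^k_h(s)$.
   Context: Setting: episodic tabular MDP with $S$ states, horizon $H$, rewards in $[0,1]$, unknown distributions independent across time steps. Fix $\ell\ge1$, $\ell_h=\min\{\ell,H-h+1\}$. $I_{h,B}(s)$ is $B$-step lookahead information from $s$ at step $h$ (realized rewards and next states of all state-action pairs reachable from $s$ at steps $h,\dots,h+B-1$), with distribution $\mathcal{I}_{h,B}(s)$. For deterministic Markov $\phi$, $\mathfrak{R}_{t\mid h}(s,\phi,I)$, $\mathfrak{s}_{t\mid h}(s,\phi,I)$ are the reward/state at step $t$ from $s_h=s$ following $\phi$ under $I$; $\mathfrak{Q}^*_h(s,B;I,V)=\max_\phi\{\sum_{t=h}^{h+B-1}\mathfrak{R}_{t\mid h}(s,\phi,I)+V(\mathfrak{s}_{h+B\mid h}(s,\phi,I))\}$. $V^*_h$ is the optimal value of adaptive batching policies, with $V^*_{H+1}\equiv0$, $V^*_h(s)=\max_{B\in[\ell_h]}Q^*_h(s,B)$, $Q^*_h(s,B)=\mathbb{E}_{I\sim\mathcal{I}_{h,B}(s)}[\mathfrak{Q}^*_h(s,B;I,V^*_{h+B})]$, and $\mathrm{Var}^*_h(s,B)$ the variance of $\mathfrak{Q}^*_h(s,B;I,V^*_{h+B})$ under $I\sim\mathcal{I}_{h,B}(s)$.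 AL-UCB notation: $n^k_h(s,B)$ is the number of episodes before $k$ in which a batch with horizon $B$ started at step $h$ in state $s$; $\widehat{\mathbb{E}}^k_{h,s,B}[f(I)]$ is the average of $f$ over the lookahead observed in those episodes (0 if none); $\widehat{\mathrm{Var}}^k_h(s,B;V)$ the corresponding empirical variance of $\mathfrak{Q}^*_h(s,B;I,V)$; $L^k_\delta=\ln\frac{18SH\ell k^3(k+1)}{\delta}$. The optimistic values are $\bar V^k_{H+1}\equiv0$, $b^k_h(s,B)=\sqrt{\frac{8\widehat{\mathrm{Var}}^k_h(s,B;\bar V^k_{h+B})L^k_\delta}{n^k_h(s,B)\vee1}}+\frac{11HL^k_\delta}{n^k_h(s,B)\vee1}$, $\bar Q^k_h(s,B)=\min\{\widehat{\mathbb{E}}^k_{h,s,B}[\mathfrak{Q}^*_h(s,B;I,\bar V^k_{h+B})]+b^k_h(s,B),H-h+1\}$, $\bar V^k_h(s)=\max_{B\in[\ell_h]}\bar Q^k_h(s,B)$. The event $\mathbb{G}_1$ is the intersection over all $k\ge1$ of: (i) for all $s,h,B$: $|Q^*_h(s,B)-\widehat{\mathbb{E}}^k_{h,s,B}[\mathfrak{Q}^*_h(s,B;I,V^*_{h+B})]|\le\sqrt{2\mathrm{Var}^*_h(s,B)L^k_\delta/(n^k_h(s,B)\vee1)}+HL^k_\delta/(n^k_h(s,B)\vee1)$; (ii) for all $s,h,B$: $|\sqrt{\widehat{\mathrm{Var}}^k_h(s,B;V^*_{h+B})}-\sqrt{\mathrm{Var}^*_h(s,B)}|\le4H\sqrt{L^k_\delta/(n^k_h(s,B)\vee1)}$;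 (iii) for all $s,h,B$ and all $V$ with $V^*_{h+B}\le V\le H$ componentwise: $\widehat{\mathbb{E}}^k_{h,s,B}[\mathfrak{Q}^*_h(s,B;I,V)-\mathfrak{Q}^*_h(s,B;I,V^*_{h+B})]\le(1+\frac{1}{2H})\mathbb{E}_{I\sim\mathcal{I}_{h,B}(s)}[\mathfrak{Q}^*_h(s,B;I,V)-\mathfrak{Q}^*_h(s,B;I,V^*_{h+B})]+\frac{4H^2SL^k_\delta}{n^k_h(s,B)\vee1}$. *)

From HB Require Import structures.
From mathcomp Require Import all_boot all_order all_algebra.
From mathcomp Require Import all_classical all_reals all_analysis.
Set Implicit Arguments. Unset Strict Implicit. Unset Printing Implicit Defensive.
Import Order.TTheory GRing.Theory Num.Theory.
Local Open Scope ring_scope.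

Section ALUCB.
Variable R : realType.
Variables S A : finType.
(* a0 : some action (the action set is nonempty); only used as the neutral
   element of a max over the (nonempty) finite set of batch policies. *)
Variable a0 : A.
Variable d : measure_display.
Variable Info : measurableType d.
(* rew I t x a = realized reward of (x,a) at step t under I;
   nxt I t x a = realized next state (state at step t+1) of (x,a) at step t. *)
Variable rew : Info -> nat -> S -> A -> R.
Variable nxt : Info -> nat -> S -> A -> S.

(* Following a batch policy, given as the list of its Markov decision rules
   for steps t, t+1, ..., from state x at step t under lookahead I:
   returns (sum of collected rewards, state reached at the end). *)
Fixpoint run (I : Info) (pol : seq {ffun S -> A}) (t : nat) (x : S) : R * S :=
  match pol with
  | [::] => (0, x)
  | f :: pol' =>
      let a := f x in
      let p := run I pol' t.+1 (nxt I t x a) in (rew I t x a + p.1, p.2)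
  end.

Definition batch_value (I : Info) (h : nat) (s : S) (pol : seq {ffun S -> A})
  (V : S -> R) : R :=
  let p := run I pol h s in p.1 + V p.2.

Definition frakQ (h : nat) (s : S) (B : nat) (I : Info) (V : S -> R) : R :=
  \big[Num.max/batch_value I h s (nseq B [ffun=> a0]) V]_(phi : B.-tuple {ffun S -> A})
    batch_value I h s phi V.

(* max_{B in [n]} f B  (n >= 1 in all uses) *)
Definition maxB (n : nat) (f : nat -> R) : R :=
  \big[Num.max/f 1%N]_(1 <= B < n.+1) f B.

Definition ellh (H ell h : nat) : nat := minn ell (H.+1 - h).

(* Backward recursion: W_{H+1} = 0, W_h(s) = step h (fun B => W_{h+B}) s.
   vtab m = [:: W_{H+1-m}; ...; W_{H+1}]. *)
Fixpoint vtab (H : nat) (step : nat -> (nat -> S -> R) -> S -> R) (m : nat)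
  : seq (S -> R) :=
  match m with
  | 0 => [:: fun _ => 0]
  | m'.+1 =>
      let tab := vtab H step m' in
      step (H - m')%N (fun B => nth (fun _ => 0) tab B.-1) :: tab
  end.

Definition backward (H : nat) (step : nat -> (nat -> S -> R) -> S -> R)
  (h : nat) : S -> R :=
  nth (fun _ => 0) (vtab H step (H.+1 - h)) 0.

Definition Expect (P : probability Info R) (f : Info -> R) : R :=
  fine (\int[P]_x (f x)%:E).
Definition Variance (P : probability Info R) (f : Info -> R) : R :=
  Expect P (fun x => (f x - Expect P f) ^+ 2).

(* Empirical mean / variance over observed samples (0 if none). *)
Definition emp_mean (xs : seq Info) (f : Info -> R) : R :=
  (\sum_(x <- xs) f x) / (maxn (size xs) 1)%:R.
Definition emp_var (xs : seq Info) (f : Info -> R) : R :=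
  emp_mean xs (fun x => (f x - emp_mean xs f) ^+ 2).

Section Values.
Variables (H ell : nat).
(* P h s B = law I_{h,B}(s) of the B-step lookahead information from s at h *)
Variable P : nat -> S -> nat -> probability Info R.
(* samp k h s B = lookahead information observed in the episodes before k in
   which a batch of horizon B started at step h in state s;
   n^k_h(s,B) = size (samp k h s B). *)
Variable samp : nat -> nat -> S -> nat -> seq Info.
Variable delta : R.

Definition Vstar : nat -> S -> R :=
  backward H (fun h W s =>
    maxB (ellh H ell h) (fun B => Expect (P h s B) (fun I => frakQ h s B I (W B)))).

Definition Qstar (h : nat) (s : S) (B : nat) : R :=
  Expect (P h s B) (fun I => frakQ h s B I (Vstar (h + B))).

Definition Varstar (h : nat) (s : S) (B : nat) : R :=
  Variance (P h s B) (fun I => frakQ h s B I (Vstar (h + B))).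

Definition nvis (k h : nat) (s : S) (B : nat) : R :=
  (maxn (size (samp k h s B)) 1)%:R.

Definition Lk (k : nat) : R :=
  ln ((18 * #|S| * H * ell * k ^ 3 * k.+1)%:R / delta).

Definition bonus (k h : nat) (s : S) (B : nat) (V : S -> R) : R :=
  Num.sqrt (8 * emp_var (samp k h s B) (fun I => frakQ h s B I V) * Lk k
            / nvis k h s B)
  + 11 * H%:R * Lk k / nvis k h s B.

(* Qbar^k_h(s,B) computed with next-value function V (= Vbar^k_{h+B}) *)
Definition Qbar_with (k h : nat) (s : S) (B : nat) (V : S -> R) : R :=
  Num.min (emp_mean (samp k h s B) (fun I => frakQ h s B I V) + bonus k h s B V)
          (H.+1 - h)%:R.

Definition Vbar (k : nat) : nat -> S -> R :=
  backward H (fun h W s => maxB (ellh H ell h) (fun B => Qbar_with k h s B (W B))).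

Definition G1 : Prop :=
  forall k, (1 <= k)%N ->
  forall h (s : S) B, (1 <= h <= H)%N -> (1 <= B <= ellh H ell h)%N ->
  let xs := samp k h s B in
  let fQs := fun I => frakQ h s B I (Vstar (h + B)) in
  let n := nvis k h s B in
  [/\ `|Qstar h s B - emp_mean xs fQs|
        <= Num.sqrt (2 * Varstar h s B * Lk k / n) + H%:R * Lk k / n,
      `|Num.sqrt (emp_var xs fQs) - Num.sqrt (Varstar h s B)|
        <= 4 * H%:R * Num.sqrt (Lk k / n) &
      forall V : S -> R, (forall x, Vstar (h + B) x <= V x <= H%:R) ->
        emp_mean xs (fun I => frakQ h s B I V - fQs I)
          <= (1 + 1 / (2 * H%:R)) * Expect (P h s B) (fun I => frakQ h s B I V - fQs I)
             + 4 * H%:R ^+ 2 * #|S|%:R * Lk k / n].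

End Values.
End ALUCB.

From HB Require Import structures.
From mathcomp Require Import all_boot all_order all_algebra.
From mathcomp Require Import all_classical all_reals all_analysis.
From mathcomp Require Import ring lra zify.
Set Implicit Arguments.
Unset Strict Implicit.
Unset Printing Implicit Defensive.

Import Order.TTheory GRing.Theory Num.Theory.
Local Open Scope ring_scope.

(* Backward induction on h gives 0 <= Vstar h <= Vbar k h <= H - h + 1.  In
   the inductive step the bonus of Qbar must absorb the error of the empirical
   estimate of Qstar.  By G1 (i) that error is at most sqrt(2 Varstar L/n) +
   H L/n, and by G1 (ii) Varstar is close to the empirical variance of
   frakQ Vstar.  Write frakQ Vstar = frakQ Vbar - D, where the gap D takes
   values in [0, H] by the induction hypothesis: its empirical variance is at
   most H times its empirical mean, and AM-GM trades the resulting
   sqrt(H mean(D) L/n) for mean(D) + H L/n, which is paid for by the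
   difference of the empirical means of frakQ Vbar and frakQ Vstar.  The claim on frakQ follows because
   frakQ is monotone in its continuation value. *)

Section SqrtBounds.
Variable R : rcfType.
Implicit Types a b : R.

Lemma sqrtrD_le a b : 0 <= a -> 0 <= b ->
  Num.sqrt (a + b) <= Num.sqrt a + Num.sqrt b.
Proof.
move=> a0 b0; have s0 := addr_ge0 (sqrtr_ge0 a) (sqrtr_ge0 b).
rewrite -[leRHS]ger0_norm // -sqrtr_sqr ler_sqrt ?sqr_ge0 //.
rewrite sqrrD !sqr_sqrtr // lerD2r lerDl.
by rewrite mulrn_wge0 // mulr_ge0 ?sqrtr_ge0.
Qed.

Lemma sqrtr_AGM2 a b : 0 <= a -> 0 <= b -> 2 * Num.sqrt (a * b) <= a + b.
Proof.
move=> a0 b0; have := sqr_ge0 (Num.sqrt a - Num.sqrt b).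
by rewrite sqrrB !sqr_sqrtr // sqrtrM //; lra.
Qed.

Lemma sqrtr4 : Num.sqrt 4 = 2 :> R.
Proof. by rewrite (_ : 4 = 2 ^+ 2) ?sqrtr_sqr ?ger0_norm //; lra. Qed.

(* Q = Qstar, ma and m = empirical means of frakQ Vstar and of the gap D,
   va, vb and vd = empirical variances of frakQ Vstar, frakQ Vbar and D,
   u = L/n. *)
Lemma bonus_covers_gap (Q ma m Var va vb vd u Hh : R) :
  0 <= u -> 0 <= Hh -> 0 <= vb -> 0 <= vd -> 0 <= m ->
  Q - ma <= Num.sqrt (2 * Var * u) + Hh * u ->
  Num.sqrt Var <= Num.sqrt va + 4 * Hh * Num.sqrt u ->
  va <= 2 * vb + 2 * vd -> vd <= Hh * m ->
  Q <= ma + m + (Num.sqrt (8 * vb * u) + 11 * Hh * u).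
Proof.
move=> u0 Hh0 vb0 vd0 m0 devQ devVar va_le vd_le.
set r := Num.sqrt u in devVar *; have r0 : 0 <= r := sqrtr_ge0 u.
have rr : r ^+ 2 = u by rewrite sqr_sqrtr.
have sqrt2_ge0 : 0 <= Num.sqrt 2 :> R := sqrtr_ge0 2.
have sqrt2_le : Num.sqrt 2 <= 3 / 2 :> R.
  by have := @sqr_sqrtr R 2; nra.
have va_split : Num.sqrt 2 * Num.sqrt va <= 2 * Num.sqrt vb + 2 * Num.sqrt vd.
  rewrite -sqrtrM //; apply: le_trans (ler_wsqrtr (_ : _ <= 4 * vb + 4 * vd)) _.
    by lra.
  have := @sqrtrD_le (4 * vb) (4 * vd); rewrite !sqrtrM ?mulr_ge0 // sqrtr4.
  by apply.
have vd_AGM : 2 * r * Num.sqrt vd <= Hh * u + m.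
  rewrite -mulrA -sqrtrM //.
  apply: le_trans (sqrtr_AGM2 (mulr_ge0 Hh0 u0) m0).
  by rewrite ler_pM2l // ler_wsqrtr // (mulrC Hh) -mulrA ler_wpM2l.
have vb_le : 2 * r * Num.sqrt vb <= Num.sqrt (8 * vb * u).
  rewrite -sqrtr4 -!sqrtrM ?mulr_ge0 // ler_wsqrtr //.
  by have := mulr_ge0 u0 vb0; nra.
have var_le : Num.sqrt (2 * Var * u) <=
    r * (2 * Num.sqrt vb + 2 * Num.sqrt vd) + 6 * Hh * u.
  rewrite mulrC !sqrtrM // -/r -rr.
  have := ler_wpM2l r0 (ler_wpM2l sqrt2_ge0 devVar).
  have := ler_wpM2l r0 va_split.
  have := ler_wpM2l (mulr_ge0 (mulr_ge0 Hh0 r0) r0) sqrt2_le.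
  lra.
by have := mulr_ge0 Hh0 u0; lra.
Qed.

End SqrtBounds.

Section MaxB.
Variable R : realType.
Implicit Types (f g : nat -> R) (n : nat).

Lemma maxB_le n f X : (0 < n)%N ->
  (forall B, (0 < B <= n)%N -> f B <= X) -> maxB n f <= X.
Proof.
move=> n_gt0 fX; rewrite /maxB big_seq; apply: bigmax_le => [|B].
  by rewrite fX ?n_gt0.
by rewrite mem_index_iota ltnS => /fX.
Qed.

Lemma le_maxB n f B : (0 < B <= n)%N -> f B <= maxB n f.
Proof. by move=> Bn; apply: le_bigmax_seq; rewrite // mem_index_iota ltnS. Qed.

Lemma le_maxB2 n f g : (0 < n)%N ->
  (forall B, (0 < B <= n)%N -> f B <= g B) -> maxB n f <= maxB n g.
Proof.
move=> n_gt0 fg; apply: maxB_le => // B Bn.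
exact: le_trans (fg B Bn) (le_maxB g Bn).
Qed.

Lemma eq_maxB n f g : (0 < n)%N ->
  (forall B, (0 < B <= n)%N -> f B = g B) -> maxB n f = maxB n g.
Proof.
move=> n_gt0 fg; rewrite /maxB fg ?n_gt0 //.
by apply: eq_big_nat => B; rewrite ltnS => /fg.
Qed.

End MaxB.

Section Backward.
Variables (R : realType) (S : finType) (H : nat).
Variable step : nat -> (nat -> S -> R) -> S -> R.

Lemma nth_vtab m i : (i <= m)%N ->
  nth (fun=> 0) (vtab H step m) i = nth (fun=> 0) (vtab H step (m - i)) 0.
Proof. by elim: i m => [|i IH] [|m] //= im; rewrite IH // subSS. Qed.

Lemma backward_out h : (H < h)%N -> backward H step h = fun=> 0.
Proof. by rewrite /backward -subn_eq0 => /eqP ->. Qed.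

Lemma backwardE h : (h <= H)%N ->
  (forall W W', (forall B, (0 < B <= H.+1 - h)%N -> W B = W' B) ->
     step h W = step h W') ->
  backward H step h = step h (fun B => backward H step (h + B)).
Proof.
move=> hH step_ext; rewrite /backward subSn //= subKn //.
apply: step_ext => B B_range; rewrite nth_vtab; last by lia.
by congr (nth _ (vtab _ _ _) _); lia.
Qed.

End Backward.

Section Expectation.
Variables (R : realType) (d : measure_display) (T : measurableType d).
Variable P : probability T R.
Implicit Type f : T -> R.

Lemma Expect_ge0 f : (forall x, 0 <= f x) -> 0 <= Expect P f.
Proof. by move=> f0; apply/fine_ge0/integral_ge0 => x _; rewrite lee_fin. Qed.

Import HBNNSimple.

(* No measurability is needed: the integral of a nonnegative function is the
   supremum of the integrals of the simple functions below it. *)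
Lemma integral_le_cst f c : (forall x, 0 <= f x <= c) ->
  (\int[P]_x (f x)%:E <= c%:E)%E.
Proof.
move=> f0c; have c0 : 0 <= c by case/andP: (f0c point) => /le_trans; apply.
rewrite ge0_integralTE; last by move=> x; rewrite lee_fin; case/andP: (f0c x).
apply/ge_ereal_sup => _ [g /= gf <-].
have := integral_nnsfun P measurableT g; rewrite patch_setT => <-.
apply: (@le_trans _ _ (\int[P]_x (cst c%:E x))%E).
  apply: ge0_le_integral => //.
  - by move=> x _; rewrite lee_fin.
  - exact/measurable_realfun.measurable_EFinP.
  - by move=> x _; apply: le_trans (gf x) _; rewrite lee_fin; case/andP: (f0c x).
by rewrite integral_cst // -[leRHS]mule1 lee_wpmul2l ?lee_fin ?probability_le1.
Qed.

Lemma Expect_le f c : (forall x, 0 <= f x <= c) -> Expect P f <= c.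
Proof.
move=> f0c; have := integral_le_cst f0c.
have : (0 <= \int[P]_x (f x)%:E)%E.
  by apply: integral_ge0 => x _; rewrite lee_fin; case/andP: (f0c x).
by rewrite /Expect; case: (\int[P]_x _)%E => //= r; rewrite !lee_fin.
Qed.

End Expectation.

Section EmpiricalMoments.
Variables (R : realType) (d : measure_display) (T : measurableType d).
Variable xs : seq T.
Implicit Types (f g : T -> R) (c : R).

Lemma emp_meanD f g :
  emp_mean xs (fun x => f x + g x) = emp_mean xs f + emp_mean xs g.
Proof. by rewrite /emp_mean big_split mulrDl. Qed.

Lemma emp_meanB f g :
  emp_mean xs (fun x => f x - g x) = emp_mean xs f - emp_mean xs g.
Proof. by rewrite /emp_mean big_split sumrN mulrBl. Qed.

Lemma emp_meanZ c f : emp_mean xs (fun x => c * f x) = c * emp_mean xs f.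
Proof. by rewrite /emp_mean -big_distrr mulrA. Qed.

Lemma ler_emp_mean f g : (forall x, f x <= g x) -> emp_mean xs f <= emp_mean xs g.
Proof. by move=> fg; apply: ler_wpM2r; rewrite ?invr_ge0 // ler_sum. Qed.

Lemma emp_mean_ge0 f : (forall x, 0 <= f x) -> 0 <= emp_mean xs f.
Proof. by move=> f0; rewrite mulr_ge0 ?invr_ge0 ?sumr_ge0. Qed.

Lemma emp_var_ge0 f : 0 <= emp_var xs f.
Proof. by apply: emp_mean_ge0 => x; apply: sqr_ge0. Qed.

Lemma emp_var_le_moment2 f : emp_var xs f <= emp_mean xs (fun x => f x ^+ 2).
Proof.
rewrite /emp_var /emp_mean; set m := (\sum_(x <- xs) f x) / _.
set N := (maxn (size xs) 1)%:R.
have N_gt0 : 0 < N by rewrite ltr0n leq_max orbT.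
apply: ler_wpM2r; first by rewrite invr_ge0 ltW.
have -> : \sum_(x <- xs) (f x - m) ^+ 2 =
    \sum_(x <- xs) f x ^+ 2 - 2 * m * \sum_(x <- xs) f x + (size xs)%:R * m ^+ 2.
  rewrite (eq_bigr (fun x => f x ^+ 2 + (- (2 * m) * f x + m ^+ 2))); last first.
    by move=> x _; ring.
  rewrite !big_split /= -big_distrr big_const_seq count_predT iter_addr_0.
  by rewrite -mulr_natl /=; ring.
have -> : \sum_(x <- xs) f x = m * N by rewrite /m mulfVK ?gt_eqF.
have : (size xs)%:R <= N by rewrite ler_nat leq_maxl.
by have := sqr_ge0 m; nra.
Qed.

Lemma emp_var_le_mean f c : (forall x, 0 <= f x <= c) ->
  emp_var xs f <= c * emp_mean xs f.
Proof.
move=> f0c; rewrite -emp_meanZ; apply: le_trans (emp_var_le_moment2 f) _.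
by apply: ler_emp_mean => x; have /andP := f0c x; nra.
Qed.

Lemma emp_varB_le f g :
  emp_var xs (fun x => f x - g x) <= 2 * emp_var xs f + 2 * emp_var xs g.
Proof.
rewrite /emp_var -!emp_meanZ -emp_meanD emp_meanB; apply: ler_emp_mean => x.
have := sqr_ge0 (f x - emp_mean xs f + (g x - emp_mean xs g)); lra.
Qed.

End EmpiricalMoments.

Lemma Lk_ge0 (R : realType) (S : finType) H ell (delta : R) k :
  0 < delta <= 1 -> (0 < #|S|)%N -> (0 < H)%N -> (0 < ell)%N -> (0 < k)%N ->
  0 <= Lk S H ell delta k.
Proof.
move=> /andP[delta_gt0 delta_le1] S_gt0 H_gt0 ell_gt0 k_gt0.
rewrite /Lk ln_ge0 // ler_pdivlMr // mul1r (le_trans delta_le1) // ler1n.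
by rewrite !muln_gt0 S_gt0 H_gt0 ell_gt0 ?expn_gt0 ?k_gt0.
Qed.

Section Lookahead.
Variables (R : realType) (S A : finType) (a0 : A).
Variables (d : measure_display) (Info : measurableType d).
Variables (rew : Info -> nat -> S -> A -> R) (nxt : Info -> nat -> S -> A -> S).
Hypothesis rew01 : forall I t x a, 0 <= rew I t x a <= 1.

Lemma run_reward_bounds I pol t x :
  0 <= (run rew nxt I pol t x).1 <= (size pol)%:R.
Proof.
elim: pol t x => [|f pol IH] t x /=; first by rewrite lexx.
have /andP[r0 r1] := rew01 I t x (f x).
have /andP[p0 p1] := IH t.+1 (nxt I t x (f x)).
by rewrite addr_ge0 //= -natr1 addrC lerD.
Qed.

Lemma frakQ_le_shift h s B I (V W : S -> R) c :
  (forall x, V x <= W x + c) ->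
  frakQ a0 rew nxt h s B I V <= frakQ a0 rew nxt h s B I W + c.
Proof.
move=> VW; have shift pol :
    batch_value rew nxt I h s pol V <= batch_value rew nxt I h s pol W + c.
  by rewrite /batch_value -addrA lerD2l.
apply: bigmax_le => [|phi _]; apply: le_trans (shift _) _; rewrite lerD2r.
  exact: bigmax_ge_id.
exact: le_bigmax.
Qed.

Lemma le_frakQ h s B I (V W : S -> R) : (forall x, V x <= W x) ->
  frakQ a0 rew nxt h s B I V <= frakQ a0 rew nxt h s B I W.
Proof.
by move=> VW; rewrite -[leRHS]addr0 frakQ_le_shift // => x; rewrite addr0.
Qed.

Lemma frakQ_bounds h s B I (V : S -> R) M : (forall x, 0 <= V x <= M) ->
  0 <= frakQ a0 rew nxt h s B I V <= B%:R + M.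
Proof.
move=> V0M; have bounds pol : size pol = B ->
    0 <= batch_value rew nxt I h s pol V <= B%:R + M.
  move=> <-; have /andP[p0 p1] := run_reward_bounds I pol h s.
  by have /andP[v0 v1] := V0M (run rew nxt I pol h s).2; rewrite addr_ge0 ?lerD.
have /andP[b0 bM] := bounds _ (size_nseq B [ffun=> a0]).
rewrite (le_trans b0 (bigmax_ge_id _ _ _ _)) /=.
by apply: bigmax_le => // phi _; case/andP: (bounds _ (size_tuple phi)).
Qed.

Section Optimism.
Variables (H ell : nat) (P : nat -> S -> nat -> probability Info R).
Variables (samp : nat -> nat -> S -> nat -> seq Info) (delta : R).
Hypothesis ell_gt0 : (0 < ell)%N.
Hypothesis delta01 : 0 < delta < 1.
Hypothesis hG1 : G1 a0 rew nxt H ell P samp delta.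

Local Notation Vs := (Vstar a0 rew nxt H ell P).
Local Notation Qs := (Qstar a0 rew nxt H ell P).
Local Notation Vb k := (Vbar a0 rew nxt H ell samp delta k).
Local Notation Qb k := (Qbar_with a0 rew nxt H ell samp delta k).

Lemma ellh_gt0 h : (h <= H)%N -> (0 < ellh H ell h)%N.
Proof. by rewrite /ellh; lia. Qed.

Lemma ellh_le h : (ellh H ell h <= H.+1 - h)%N.
Proof. exact: geq_minr. Qed.

Lemma VstarE h s : (h <= H)%N -> Vs h s = maxB (ellh H ell h) (Qs h s).
Proof.
move=> hH; rewrite /Vstar backwardE // => W W' WW'.
apply/funext => x; apply: eq_maxB => [|B /andP[B_gt0 Bh]]; first exact: ellh_gt0.
by rewrite WW' // B_gt0 (leq_trans Bh (ellh_le h)).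
Qed.

Lemma VbarE k h s : (h <= H)%N ->
  Vb k h s = maxB (ellh H ell h) (fun B => Qb k h s B (Vb k (h + B))).
Proof.
move=> hH; rewrite /Vbar backwardE // => W W' WW'.
apply/funext => x; apply: eq_maxB => [|B /andP[B_gt0 Bh]]; first exact: ellh_gt0.
by rewrite WW' // B_gt0 (leq_trans Bh (ellh_le h)).
Qed.

Definition value_chain k h := forall x,
  [/\ 0 <= Vs h x, Vs h x <= Vb k h x & Vb k h x <= (H.+1 - h)%:R].

Lemma value_chain_out k h : (H < h)%N -> value_chain k h.
Proof.
by move=> Hh x; rewrite /Vstar /Vbar !backward_out // lexx.
Qed.

Lemma value_chain_Vstar k h : value_chain k h ->
  forall x, 0 <= Vs h x <= (H.+1 - h)%:R.
Proof. by move=> chain x; case: (chain x) => -> VsVb /(le_trans VsVb). Qed.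

Lemma Qstar_bounds h s B : (B <= H.+1 - h)%N ->
  (forall x, 0 <= Vs (h + B) x <= (H.+1 - (h + B))%:R) ->
  0 <= Qs h s B <= (H.+1 - h)%:R.
Proof.
move=> BH Vs_bounds; have fQ I := frakQ_bounds h s B I Vs_bounds.
rewrite Expect_ge0 => [|I]; last by case/andP: (fQ I).
apply: Expect_le => I; rewrite -natrD in fQ.
by rewrite (_ : B + (H.+1 - (h + B)) = H.+1 - h)%N in fQ; [apply: fQ | lia].
Qed.

Lemma frakQ_gap_bounds k t h s B I : (0 < t)%N -> value_chain k t ->
  0 <= frakQ a0 rew nxt h s B I (Vb k t) - frakQ a0 rew nxt h s B I (Vs t) <= H%:R.
Proof.
move=> t_gt0 chain; rewrite subr_ge0 lerBlDl le_frakQ => [|x]; last by case: (chain x).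
apply: frakQ_le_shift => x; case: (chain x) => Vs0 _ VbH.
by rewrite (le_trans VbH) // -[leLHS]add0r lerD // ler_nat; lia.
Qed.

Lemma Qstar_le_Qbar k h s B :
  (0 < k)%N -> (0 < h <= H)%N -> (0 < B <= ellh H ell h)%N ->
  value_chain k (h + B) -> Qs h s B <= Qb k h s B (Vb k (h + B)).
Proof.
move=> k_gt0 hH Bh chain.
have BH : (B <= H.+1 - h)%N by case/andP: Bh => _ /leq_trans; apply; exact: ellh_le.
have /andP[_ QsH] := Qstar_bounds s BH (value_chain_Vstar chain).
rewrite /Qbar_with le_min QsH andbT.
have [devQ devVar _] := hG1 k_gt0 s hH Bh.
set xs := samp k h s B in devQ devVar *.
set fa := fun I => frakQ a0 rew nxt h s B I (Vs (h + B)) in devQ devVar *.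
set fb := fun I => frakQ a0 rew nxt h s B I (Vb k (h + B)).
set gap := fun I => fb I - fa I.
have gap_bounds I : 0 <= gap I <= H%:R.
  by apply: frakQ_gap_bounds chain; case/andP: hH => /ltn_addr.
have mean_split : emp_mean xs fb = emp_mean xs fa + emp_mean xs gap.
  by rewrite emp_meanB addrC subrK.
have var_split : emp_var xs fa <= 2 * emp_var xs fb + 2 * emp_var xs gap.
  have -> : fa = fun I => fb I - gap I by apply/funext => I; rewrite opprB addrC subrK.
  exact: emp_varB_le.
set L := Lk S H ell delta k in devQ devVar *.
set n := nvis R samp k h s B in devQ devVar *.
have L_ge0 : 0 <= L.
  have [delta_gt0 /ltW delta_le1] := andP delta01.
  have S_gt0 : (0 < #|S|)%N by apply/card_gt0P; exists s.
  by apply: Lk_ge0; rewrite ?delta_gt0 ?delta_le1 ?ell_gt0 //; lia.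
have mulLn a : a * L / n = a * (L / n) by rewrite mulrA.
rewrite /bonus mean_split !mulLn; rewrite !mulLn in devQ.
apply: (bonus_covers_gap _ _ _ _ _ _ _ var_split (emp_var_le_mean _ gap_bounds)).
- by rewrite divr_ge0 ?ler0n.
- exact: ler0n.
- exact: emp_var_ge0.
- exact: emp_var_ge0.
- by apply: emp_mean_ge0 => I; case/andP: (gap_bounds I).
- exact: le_trans (ler_norm _) devQ.
- by move: devVar; rewrite ler_distl lerBlDr => /andP[].
Qed.

Lemma value_chain_all k : (0 < k)%N -> forall h, (0 < h)%N -> value_chain k h.
Proof.
move=> k_gt0; suff chain n h : (0 < h)%N -> (H.+1 - h <= n)%N -> value_chain k h.
  by move=> h h_gt0; apply: chain h_gt0 (leqnn _).
elim: n h => [|n IH] h h_gt0 hn; first by apply: value_chain_out; lia.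
have [Hh | hH] := ltnP H h; first exact: value_chain_out.
have chainB B : (0 < B <= ellh H ell h)%N -> value_chain k (h + B).
  by move=> /andP[B_gt0 _]; apply: IH; lia.
move=> x; rewrite VstarE // VbarE //; split.
- have B1 : (0 < 1 <= ellh H ell h)%N by rewrite ellh_gt0.
  have B1H : (1 <= H.+1 - h)%N by lia.
  have /andP[Qs0 _] := Qstar_bounds x B1H (value_chain_Vstar (chainB 1%N B1)).
  exact: le_trans Qs0 (le_maxB _ B1).
- apply: le_maxB2 => [|B Bh]; first exact: ellh_gt0.
  by apply: Qstar_le_Qbar k_gt0 _ Bh (chainB B Bh); rewrite h_gt0.
- by apply: maxB_le => [|B _]; rewrite ?ellh_gt0 // ge_min lexx orbT.
Qed.

End Optimism.
End Lookahead.

Theorem lemma3 (R : realType) (S A : finType) (a0 : A) (d : measure_display)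
  (Info : measurableType d)
  (rew : Info -> nat -> S -> A -> R) (nxt : Info -> nat -> S -> A -> S)
  (rew01 : forall I t x a, 0 <= rew I t x a <= 1)
  (rew_meas : forall t x a, measurable_fun setT (fun I => rew I t x a))
  (nxt_meas : forall t x a y, measurable [set I | nxt I t x a = y])
  (H ell : nat) (ell_ge1 : (1 <= ell)%N)
  (P : nat -> S -> nat -> probability Info R)
  (samp : nat -> nat -> S -> nat -> seq Info)
  (delta : R) (delta01 : 0 < delta < 1)
  (hG1 : G1 a0 rew nxt H ell P samp delta) :
  forall k, (1 <= k)%N ->
  forall h (s : S) B (I : Info), (1 <= h <= H)%N -> (1 <= B <= ellh H ell h)%N ->
    frakQ a0 rew nxt h s B I (Vstar a0 rew nxt H ell P (h + B))
      <= frakQ a0 rew nxt h s B I (Vbar a0 rew nxt H ell samp delta k (h + B))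
    /\ Vstar a0 rew nxt H ell P h s <= Vbar a0 rew nxt H ell samp delta k h s.
Proof.
move=> k k_gt0 h s B I /andP[h_gt0 _] _.
have chain := value_chain_all rew01 ell_ge1 delta01 hG1 k_gt0.
split; last by case: (chain h h_gt0 s).
by apply: le_frakQ => x; case: (chain (h + B)%N (ltn_addr _ h_gt0) x).
Qed.
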